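(* Let $M=\langle n_1,n_2,n_3\rangle$ be a numerical monoid of embedding dimension three with minimal generators $n_1<n_2<n_3$ and exactly three Betti elements, and let $(r_{ij})$ be its associated 0-matrix. Then: (1) $L(x+n_1)=L(x)+1$ holds for all $x\in M$ if and only if $r_{12}+r_{32}\leq r_{21}+r_{23}$; (2) $\ell(x+n_3)=\ell(x)+1$ holds for all $x\in M$ if and only if $r_{12}+r_{32}\geq r_{21}+r_{23}$.
   Context: $\mathbb{N}$ denotes the nonnegative integers. A numerical monoid is a submonoid of $\mathbb{N}$ with finite complement. For $x\in M$, $\mathsf{Z}(x)=\{(a_1,a_2,a_3)\in\mathbb{N}^3\mid a_1n_1+a_2n_2+a_3n_3=x\}$; $L(x)$, $\ell(x)$ are the maximum and minimum of $a_1+a_2+a_3$ over $\mathsf{Z}(x)$. The graph $\nabla_x$ has vertex set $\mathsf{Z}(x)$, distinct $v,v'$ adjacent iff $v\cdot v'\neq0$; $x$ is a Betti element if $\nabla_x$ is disconnected. For $i=1,2,3$, $c_i=\min\{k\geq1\mid\exists(a_1,a_2,a_3)\in\mathsf{Z}(kn_i),\ a_i=0\}$. The associated 0-matrix of $M$ is $\begin{pmatrix}0&r_{12}&r_{13}\\ r_{21}&0&r_{23}\\ r_{31}&r_{32}&0\end{pmatrix}$ where $r_{ij}\in\mathbb{N}$ satisfy $c_1n_1=r_{12}n_2+r_{13}n_3$, $c_2n_2=r_{21}n_1+r_{23}n_3$, $c_3n_3=r_{31}n_1+r_{32}n_2$ (these are uniquely determined, and positive, when $M$ has three Betti elements). 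*)

From mathcomp Require Import all_boot.
Set Implicit Arguments. Unset Strict Implicit. Unset Printing Implicit Defensive.

Definition triple := (nat * nat * nat)%type.

Definition inM (n1 n2 n3 x : nat) : Prop :=
  exists a1 a2 a3, a1 * n1 + a2 * n2 + a3 * n3 = x.

(* Z(x): the set of factorizations of x. Each coordinate is bounded by x,
   which loses nothing when n1, n2, n3 >= 1 (guaranteed by the hypotheses
   of the main theorem). *)
Definition fact (n1 n2 n3 x : nat) : seq triple :=
  [seq t <- [seq (ab, c) | ab <- [seq (a, b) | a <- iota 0 x.+1, b <- iota 0 x.+1], c <- iota 0 x.+1]
     | t.1.1 * n1 + t.1.2 * n2 + t.2 * n3 == x].

Definition len (t : triple) : nat := t.1.1 + t.1.2 + t.2.

Definition dot (t u : triple) : nat := t.1.1 * u.1.1 + t.1.2 * u.1.2 + t.2 * u.2.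

Definition Lmax (n1 n2 n3 x : nat) : nat := \max_(t <- fact n1 n2 n3 x) len t.

(* l(x): minimal factorization length (0 if Z(x) is empty) *)
Definition lmin (n1 n2 n3 x : nat) : nat :=
  let s := [seq len t | t <- fact n1 n2 n3 x] in foldr minn (head 0 s) s.

Definition nabla_connected (n1 n2 n3 x : nat) : Prop :=
  forall S : triple -> Prop,
    (exists z, z \in fact n1 n2 n3 x /\ S z) ->
    (forall v w, v \in fact n1 n2 n3 x -> w \in fact n1 n2 n3 x -> v <> w ->
       dot v w <> 0 -> S v -> S w) ->
    forall z, z \in fact n1 n2 n3 x -> S z.

Definition betti (n1 n2 n3 x : nat) : Prop :=
  inM n1 n2 n3 x /\ ~ nabla_connected n1 n2 n3 x.

Definition numerical3 (n1 n2 n3 : nat) : Prop :=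
  [/\ n1 < n2 < n3,
      (exists F, forall x, F <= x -> inM n1 n2 n3 x),
      ~ (exists a2 a3, a2 * n2 + a3 * n3 = n1),
      ~ (exists a1 a3, a1 * n1 + a3 * n3 = n2) &
      ~ (exists a1 a2, a1 * n1 + a2 * n2 = n3)].

Definition three_betti (n1 n2 n3 : nat) : Prop :=
  exists b1 b2 b3, [/\ b1 <> b2, b1 <> b3, b2 <> b3 &
    forall x, betti n1 n2 n3 x <-> (x = b1 \/ x = b2 \/ x = b3)].

Definition least_pos (P : nat -> Prop) (c : nat) : Prop :=
  [/\ 0 < c, P c & forall k, 0 < k -> P k -> c <= k].

Definition is_c1 (n1 n2 n3 c : nat) : Prop :=
  least_pos (fun k => exists a2 a3, k * n1 = a2 * n2 + a3 * n3) c.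
Definition is_c2 (n1 n2 n3 c : nat) : Prop :=
  least_pos (fun k => exists a1 a3, k * n2 = a1 * n1 + a3 * n3) c.
Definition is_c3 (n1 n2 n3 c : nat) : Prop :=
  least_pos (fun k => exists a1 a2, k * n3 = a1 * n1 + a2 * n2) c.

(* A factorization class of a disconnected graph nabla_x is supported on a
   single generator n_i, and minimality of c_i then forces x = c_i n_i; so with three
   Betti elements the values c_i n_i are distinct. This makes every r_ij positive and
   smaller than c_j, and summing the rows of the 0-matrix gives c2 = r12 + r32.
   For (1), a longest factorization of x + n1 avoiding n1 can be rewritten with one row
   of the 0-matrix into a factorization using n1 that is not shorter: row 3 and row 1
   lengthen it (c3 < r31 + r32 and r12 + r13 < c1, as n1 < n2 < n3), row 2 does not
   shorten it iff c2 <= r21 + r23, and if no row applies it lies in the Apery set of n1,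
   contradicting x + n1 - n1 = x in M. Conversely, if r21 + r23 < c2, then
   x = (r21 - 1) n1 + r23 n3 satisfies x + n1 = c2 n2, whose only factorization using
   n1 is (r21, 0, r23), so L(x) + 1 = r21 + r23 < c2 <= L(x + n1). Part (2) is the
   mirror image for shortest factorizations and n3. *)

From mathcomp Require Import all_boot zify.
From Stdlib Require Import Classical.
Set Implicit Arguments. Unset Strict Implicit. Unset Printing Implicit Defensive.

Lemma bigmax_seq_attained (I : eqType) (r : seq I) (F : I -> nat) :
  r != [::] -> exists2 i, i \in r & \max_(j <- r) F j = F i.
Proof.
elim: r => // i [|j r] IH _; first by exists i; rewrite ?big_seq1 ?mem_seq1.
have [k kr max_k] := IH isT; rewrite big_cons max_k.
case: (leqP (F i) (F k)) => h.
  by exists k; [rewrite inE kr orbT | lia].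
by exists i; [rewrite inE eqxx | lia].
Qed.

Lemma foldr_minn_le d (s : seq nat) (y : nat) : y \in s -> foldr minn d s <= y.
Proof. by elim: s => //= a s IH; rewrite inE => /predU1P [->|/IH]; lia. Qed.

Lemma foldr_minn_mem d (s : seq nat) : foldr minn d s \in d :: s.
Proof.
elim: s => [|a s IH] /=; first exact: mem_head.
rewrite !inE; case: leqP => _; first by rewrite eqxx orbT.
by move: IH; rewrite inE => /orP[->|->]; rewrite ?orbT.
Qed.

Section Factorizations.
Variables n1 n2 n3 : nat.
Hypotheses (n1_gt0 : 0 < n1) (n2_gt0 : 0 < n2) (n3_gt0 : 0 < n3).

Lemma mem_fact x (t : triple) :
  (t \in fact n1 n2 n3 x) = (t.1.1 * n1 + t.1.2 * n2 + t.2 * n3 == x).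
Proof.
case: t => [[a b] c]; rewrite /fact mem_filter.
case: eqP => [def_x|//]; simpl in def_x.
have := leq_pmulr a n1_gt0; have := leq_pmulr b n2_gt0; have := leq_pmulr c n3_gt0.
move=> c_le b_le a_le; apply/allpairsP; exists ((a, b), c).
split=> //; last by rewrite mem_iota /=; lia.
by apply/allpairsP; exists (a, b); rewrite !mem_iota /=; split=> //; lia.
Qed.

Lemma Lmax_ge x a b c : a * n1 + b * n2 + c * n3 = x -> a + b + c <= Lmax n1 n2 n3 x.
Proof.
by move=> def_x; apply: (leq_bigmax_seq (F := len) ((a, b), c)); rewrite // mem_fact def_x.
Qed.

Lemma Lmax_attained x : inM n1 n2 n3 x ->
  exists a b c, a * n1 + b * n2 + c * n3 = x /\ Lmax n1 n2 n3 x = a + b + c.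
Proof.
case=> a [b [c def_x]].
have /(bigmax_seq_attained len)[[[a' b'] c']] : fact n1 n2 n3 x != [::].
  by apply/eqP => Fx; have := mem_fact x ((a, b), c); rewrite Fx def_x eqxx.
by rewrite mem_fact => /eqP def_x' max_t; exists a', b', c'.
Qed.

Lemma lmin_le x a b c : a * n1 + b * n2 + c * n3 = x -> lmin n1 n2 n3 x <= a + b + c.
Proof.
move=> def_x; apply: foldr_minn_le; apply/mapP; exists ((a, b), c) => //.
by rewrite mem_fact def_x.
Qed.

Lemma lmin_attained x : inM n1 n2 n3 x ->
  exists a b c, a * n1 + b * n2 + c * n3 = x /\ lmin n1 n2 n3 x = a + b + c.
Proof.
case=> a [b [c def_x]]; rewrite /lmin.
set s := map len _.
have s_len : len ((a, b), c) \in s by apply: map_f; rewrite mem_fact def_x.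
have s_lmin : foldr minn (head 0 s) s \in s.
  move: (foldr_minn_mem (head 0 s) s); rewrite inE => /predU1P[->|//].
  by case: s s_len => // y s' _; apply: mem_head.
case/mapP: s_lmin => [[[a' b'] c']]; rewrite mem_fact => /eqP def_x' ->.
by exists a', b', c'.
Qed.

End Factorizations.

(* [is_c1], [is_c2], [is_c3] unfold to [is_c n1 n2 n3], [is_c n2 n1 n3], [is_c n3 n1 n2]. *)
Definition is_c (p q s c : nat) : Prop :=
  least_pos (fun k => exists a b, k * p = a * q + b * s) c.

Section MinimalMultiple.
Variables p q s c : nat.
Hypothesis c_min : is_c p q s c.

Lemma is_c_gt0 : 0 < c.
Proof. by case: c_min. Qed.

Lemma is_c_rel : exists a b, c * p = a * q + b * s.
Proof. by case: c_min. Qed.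

Lemma is_c_le k a b : 0 < k -> k * p = a * q + b * s -> c <= k.
Proof. by case: c_min => _ _ c_le k_gt0 def_kp; apply: c_le k_gt0 _; exists a, b. Qed.

End MinimalMultiple.

Lemma is_cC p q s c : is_c p q s c -> is_c p s q c.
Proof.
case=> c_gt0 [a [b def_c]] c_le; split=> // [|k k_gt0 [a' [b' def_k]]].
  by exists b, a; rewrite addnC.
by apply: c_le k_gt0 _; exists b', a'; rewrite addnC.
Qed.

Lemma is_c_pure_rel p q s cp cq a : 0 < p -> 0 < q ->
  is_c p q s cp -> is_c q p s cq -> cp * p = a * q -> cp * p <> cq * q ->
  cq * q < cp * p /\ exists w, cq * q = w * s.
Proof.
move=> p_gt0 q_gt0 cp_min cq_min def_cp neq_cpq.
have cp_gt0 := is_c_gt0 cp_min.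
have cq_le_a : cq <= a by apply: (is_c_le (a := cp) (b := 0) cq_min); nia.
have cq_lt_a : cq < a.
  by rewrite ltn_neqAle cq_le_a andbT; apply/eqP => cq_a; apply: neq_cpq; rewrite def_cp cq_a.
have [d def_a] : exists d, a = cq + d.+1 by exists (a - cq).-1; lia.
have [u [w def_cq]] := is_c_rel cq_min.
have u0 : u = 0.
  case: (posnP u) => // u_gt0; case: (ltnP u cp) => [u_lt|u_ge].
    have := is_c_le (a := d.+1) (b := w) cp_min (_ : 0 < cp - u); nia.
  nia.
by split; [nia | exists w; rewrite def_cq u0].
Qed.

Lemma two_gen_rep_unique p q s cp cs a c a' c' : 0 < p -> 0 < s ->
  is_c p q s cp -> is_c s q p cs -> a' < cp -> c' < cs ->
  a * p + c * s = a' * p + c' * s -> a = a' /\ c = c'.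
Proof.
move=> p_gt0 s_gt0 cp_min cs_min a'_lt c'_lt eq_rep.
case: (ltngtP a a') => [a_lt|a_gt|a_eq].
- have := is_c_le (a := 0) (b := c - c') cp_min (_ : 0 < a' - a); nia.
- have := is_c_le (a := 0) (b := a - a') cs_min (_ : 0 < c' - c); nia.
- by split=> //; apply/eqP; rewrite -(eqn_pmul2r s_gt0); apply/eqP; nia.
Qed.

Lemma apery_coord_eq0 p q s cp cq cs Rq Rs a b u v w : 0 < p -> 0 < q -> 0 < s ->
  is_c p q s cp -> is_c q p s cq -> is_c s p q cs -> cp * p = Rq * q + Rs * s ->
  a < cq -> b < cs -> ~ (Rq <= a /\ Rs <= b) ->
  u * p + v * q + w * s = a * q + b * s -> u = 0.
Proof.
move=> p_gt0 q_gt0 s_gt0 cp_min cq_min cs_min def_cp a_lt b_lt not_le eq_rep.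
case: (posnP u) => // u_gt0; exfalso.
case: (ltnP v a) => [v_lt|v_ge]; last first.
  case: (ltnP w b) => [w_lt|w_ge]; last by nia.
  by have := is_c_le (a := u) (b := v - a) cs_min (_ : 0 < b - w); nia.
case: (ltnP w b) => [w_lt|w_ge]; last first.
  by have := is_c_le (a := u) (b := w - b) cq_min (_ : 0 < a - v); nia.
have cp_le : cp <= u by apply: (is_c_le (a := a - v) (b := b - w) cp_min); nia.
case: (leqP Rq (a - v)) => [Rq_le|Rq_gt]; case: (leqP Rs (b - w)) => [Rs_le|Rs_gt].
- by apply: not_le; lia.
- by have := is_c_le (a := u - cp) (b := Rs - (b - w)) cq_min (_ : 0 < a - v - Rq); nia.
- by have := is_c_le (a := u - cp) (b := Rq - (a - v)) cs_min (_ : 0 < b - w - Rs); nia.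
- nia.
Qed.

Definition separates (n1 n2 n3 x : nat) (C : triple -> Prop) : Prop :=
  [/\ exists2 v, v \in fact n1 n2 n3 x & C v,
      exists2 w, w \in fact n1 n2 n3 x & ~ C w &
      forall v w, v \in fact n1 n2 n3 x -> w \in fact n1 n2 n3 x ->
        C v -> ~ C w -> dot v w = 0].

Lemma dotC v w : dot v w = dot w v.
Proof. by rewrite /dot; lia. Qed.

Lemma not_connected_separates n1 n2 n3 x :
  ~ nabla_connected n1 n2 n3 x -> exists C, separates n1 n2 n3 x C.
Proof.
move=> not_conn; apply: NNPP => no_sep; apply: not_conn => S [z [zF Sz]] S_closed y yF.
apply: NNPP => nSy; apply: no_sep; exists S; split; [by exists z | by exists y |].
move=> v w vF wF Sv nSw; apply: NNPP => dot_neq0; apply: (nSw).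
by apply: (S_closed v w vF wF _ dot_neq0 Sv) => eq_vw; apply: nSw; rewrite -eq_vw.
Qed.

Lemma separatesC n1 n2 n3 x C :
  separates n1 n2 n3 x C -> separates n1 n2 n3 x (fun t => ~ C t).
Proof.
case=> [[v vF Cv] [w wF nCw] cross]; split; [by exists w | by exists v |].
by move=> v' w' v'F w'F nCv' /NNPP Cw'; rewrite dotC; apply: cross.
Qed.

Lemma separates_perm n1 n2 n3 m1 m2 m3 x (sigma : triple -> triple) C :
  involutive sigma ->
  (forall t, (sigma t \in fact m1 m2 m3 x) = (t \in fact n1 n2 n3 x)) ->
  (forall v w, dot (sigma v) (sigma w) = dot v w) ->
  separates n1 n2 n3 x C -> separates m1 m2 m3 x (C \o sigma).
Proof.
move=> sigmaK mem_sigma dot_sigma [[v vF Cv] [w wF nCw] cross].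
split; [exists (sigma v) | exists (sigma w) |]; rewrite /= ?sigmaK ?mem_sigma //.
move=> v' w' v'F w'F Cv' nCw'; rewrite -dot_sigma.
by apply: cross; rewrite // -mem_sigma sigmaK.
Qed.

Definition uses (n1 n2 n3 x : nat) (K : triple -> Prop) (f : triple -> nat) : Prop :=
  exists2 v, v \in fact n1 n2 n3 x & K v /\ 0 < f v.

(* [Ui], [Vi]: the supports of the two classes contain generator [i]. Two disjoint
   nonempty subsets of a three-element set: one of them is a singleton. *)
Lemma singleton_of_disjoint3 (U1 U2 U3 V1 V2 V3 : Prop) :
  ~ (U1 /\ V1) -> ~ (U2 /\ V2) -> ~ (U3 /\ V3) -> [\/ U1, U2 | U3] -> [\/ V1, V2 | V3] ->
  (~ U2 /\ ~ U3 \/ ~ U1 /\ ~ U3 \/ ~ U1 /\ ~ U2) \/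
  (~ V2 /\ ~ V3 \/ ~ V1 /\ ~ V3 \/ ~ V1 /\ ~ V2).
Proof.
move=> d1 d2 d3 sU sV.
by case: (classic U1); case: (classic U2); case: (classic U3); case: sU; case: sV; tauto.
Qed.

Definition swap12 (t : triple) : triple := (t.1.2, t.1.1, t.2).
Definition swap13 (t : triple) : triple := (t.2, t.1.2, t.1.1).

Lemma swap12K : involutive swap12. Proof. by case=> [[]]. Qed.
Lemma swap13K : involutive swap13. Proof. by case=> [[]]. Qed.

Lemma dot_swap12 v w : dot (swap12 v) (swap12 w) = dot v w.
Proof. by rewrite /dot /=; lia. Qed.

Lemma dot_swap13 v w : dot (swap13 v) (swap13 w) = dot v w.
Proof. by rewrite /dot /=; lia. Qed.

Section BettiElements.
Variables n1 n2 n3 : nat.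
Hypotheses (n1_gt0 : 0 < n1) (n2_gt0 : 0 < n2) (n3_gt0 : 0 < n3).
Local Notation F x := (fact n1 n2 n3 x).

Lemma mem_fact_swap12 x t : (swap12 t \in fact n2 n1 n3 x) = (t \in F x).
Proof. by rewrite !mem_fact //=; congr (_ == _); lia. Qed.

Lemma mem_fact_swap13 x t : (swap13 t \in fact n3 n2 n1 x) = (t \in F x).
Proof. by rewrite !mem_fact //=; congr (_ == _); lia. Qed.

Lemma separates_gt0 x C : separates n1 n2 n3 x C -> 0 < x.
Proof.
case=> [[[[a b] c] vF Cv] [[[a' b'] c'] wF nCw] _]; case: (posnP x) => // x0.
move: vF wF; rewrite x0 !mem_fact //= => /eqP v0 /eqP w0.
suff eq_vw : ((a, b), c) = ((a', b'), c') by case: nCw; rewrite -eq_vw.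
by congr (_, _, _); nia.
Qed.

Lemma not_uses_eq0 x K f g :
  ~ uses n1 n2 n3 x K f -> ~ uses n1 n2 n3 x K g ->
  forall v, v \in F x -> K v -> f v = 0 /\ g v = 0.
Proof.
move=> no_f no_g v vF Kv; split; apply: NNPP => /eqP; rewrite -lt0n => pos.
  by apply: no_f; exists v.
by apply: no_g; exists v.
Qed.

Lemma uses_some x (K : triple -> Prop) v : 0 < x -> v \in F x -> K v ->
  [\/ uses n1 n2 n3 x K (fun t => t.1.1), uses n1 n2 n3 x K (fun t => t.1.2)
     | uses n1 n2 n3 x K (fun t => t.2)].
Proof.
case: v => [[a b] c] x_gt0 vF Kv; move: (vF); rewrite mem_fact //= => /eqP def_x.
case: (posnP a) => [a0|]; last by constructor 1; exists ((a, b), c).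
case: (posnP b) => [b0|]; last by constructor 2; exists ((a, b), c).
by constructor 3; exists ((a, b), c) => //; split=> //=; nia.
Qed.

Lemma separates_uses_disjoint x C : separates n1 n2 n3 x C ->
  let U f := uses n1 n2 n3 x C f in let V f := uses n1 n2 n3 x (fun t => ~ C t) f in
  [/\ ~ (U (fun t => t.1.1) /\ V (fun t => t.1.1)),
      ~ (U (fun t => t.1.2) /\ V (fun t => t.1.2)) &
      ~ (U (fun t => t.2) /\ V (fun t => t.2))].
Proof.
case=> _ _ cross U V.
split=> -[[v vF [Cv fv]] [w wF [nCw fw]]]; have := leq_mul fv fw.
all: by have := cross _ _ vF wF Cv nCw; rewrite /dot; lia.
Qed.

Lemma separates_pure x C : separates n1 n2 n3 x C -> exists K, separates n1 n2 n3 x K /\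
  [\/ forall v : triple, v \in F x -> K v -> v.1.2 = 0 /\ v.2 = 0,
      forall v : triple, v \in F x -> K v -> v.1.1 = 0 /\ v.2 = 0 |
      forall v : triple, v \in F x -> K v -> v.1.1 = 0 /\ v.1.2 = 0].
Proof.
move=> sepC; have x_gt0 := separates_gt0 sepC.
have [[v vF Cv] [w wF nCw] _] := sepC.
have [d1 d2 d3] /= := separates_uses_disjoint sepC.
have := singleton_of_disjoint3 d1 d2 d3 (uses_some x_gt0 vF Cv)
  (uses_some (K := fun t => ~ C t) x_gt0 wF nCw).
case=> [[[no2 no3]|[[no1 no3]|[no1 no2]]]|[[no2 no3]|[[no1 no3]|[no1 no2]]]];
  [exists C | exists C | exists C | exists (fun t => ~ C t) ..];
  (split; first by [| apply: separatesC]).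
- by constructor 1; apply: not_uses_eq0 no2 no3.
- by constructor 2; apply: not_uses_eq0 no1 no3.
- by constructor 3; apply: not_uses_eq0 no1 no2.
- by constructor 1; apply: not_uses_eq0 no2 no3.
- by constructor 2; apply: not_uses_eq0 no1 no3.
- by constructor 3; apply: not_uses_eq0 no1 no2.
Qed.

Lemma pure1_eq_c x K c : is_c n1 n2 n3 c -> separates n1 n2 n3 x K ->
  (forall v : triple, v \in F x -> K v -> v.1.2 = 0 /\ v.2 = 0) -> x = c * n1.
Proof.
move=> c_min sepK pureK; have x_gt0 := separates_gt0 sepK.
case: sepK => [[[[m b0] c0] vF Kv] [[[a b] c'] wF nKw] cross].
have [/= b00 c00] := pureK _ vF Kv; rewrite {}b00 {}c00 in vF Kv.
move: (vF) (wF); rewrite !mem_fact //= => /eqP def_x /eqP def_x'.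
have m_gt0 : 0 < m by nia.
have a0 : a = 0 by have := cross _ _ vF wF Kv nKw; rewrite /dot /=; nia.
have isolated a1 b1 c1 : a1 * n1 + b1 * n2 + c1 * n3 = x -> 0 < a1 -> b1 = 0 /\ c1 = 0.
  move=> def_x1 a1_gt0; have tF : ((a1, b1), c1) \in F x by rewrite mem_fact // def_x1.
  case: (classic (K ((a1, b1), c1))) => [Kt|nKt]; first exact: pureK tF Kt.
  by have := cross _ _ vF tF Kv nKt; rewrite /dot /=; nia.
have c_le : c <= m by apply: (is_c_le (a := b) (b := c') c_min); nia.
have [a2 [b2 def_c]] := is_c_rel c_min.
case: (ltnP c m) => [c_lt|]; last by nia.
have [a20 b20] : a2 = 0 /\ b2 = 0 by apply: (isolated (m - c)); nia.
by have := is_c_gt0 c_min; nia.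
Qed.

End BettiElements.

Lemma betti_eq_c n1 n2 n3 c1 c2 c3 x : 0 < n1 -> 0 < n2 -> 0 < n3 ->
  is_c n1 n2 n3 c1 -> is_c n2 n1 n3 c2 -> is_c n3 n1 n2 c3 ->
  betti n1 n2 n3 x -> [\/ x = c1 * n1, x = c2 * n2 | x = c3 * n3].
Proof.
move=> n1_gt0 n2_gt0 n3_gt0 c1_min c2_min c3_min [_ /not_connected_separates[C sepC]].
have [K [sepK [pure1|pure2|pure3]]] := separates_pure n1_gt0 n2_gt0 n3_gt0 sepC.
- by constructor 1; apply: pure1_eq_c sepK pure1.
- constructor 2; apply: (pure1_eq_c n2_gt0 n1_gt0 n3_gt0 (K := K \o swap12) c2_min).
    exact: separates_perm swap12K (mem_fact_swap12 n1_gt0 n2_gt0 n3_gt0 x) dot_swap12 sepK.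
  by move=> v; rewrite -(mem_fact_swap12 n2_gt0 n1_gt0 n3_gt0) => vF Kv; apply: pure2 vF Kv.
- constructor 3; apply: (pure1_eq_c n3_gt0 n2_gt0 n1_gt0 (K := K \o swap13) (is_cC c3_min)).
    exact: separates_perm swap13K (mem_fact_swap13 n1_gt0 n2_gt0 n3_gt0 x) dot_swap13 sepK.
  by move=> v; rewrite -(mem_fact_swap13 n3_gt0 n2_gt0 n1_gt0) => vF Kv; have [] := pure3 _ vF Kv.
Qed.

Lemma three_betti_neq n1 n2 n3 c1 c2 c3 : 0 < n1 -> 0 < n2 -> 0 < n3 ->
  is_c n1 n2 n3 c1 -> is_c n2 n1 n3 c2 -> is_c n3 n1 n2 c3 -> three_betti n1 n2 n3 ->
  [/\ c1 * n1 <> c2 * n2, c1 * n1 <> c3 * n3 & c2 * n2 <> c3 * n3].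
Proof.
move=> n1_gt0 n2_gt0 n3_gt0 c1_min c2_min c3_min [b1 [b2 [b3 [neq12 neq13 neq23 bettiP]]]].
have betti_c b : betti n1 n2 n3 b -> [\/ b = c1 * n1, b = c2 * n2 | b = c3 * n3].
  exact: betti_eq_c n1_gt0 n2_gt0 n3_gt0 c1_min c2_min c3_min.
have /betti_c b1E : betti n1 n2 n3 b1 by apply/bettiP; left.
have /betti_c b2E : betti n1 n2 n3 b2 by apply/bettiP; right; left.
have /betti_c b3E : betti n1 n2 n3 b3 by apply/bettiP; right; right.
by move: neq12 neq13 neq23; case: b1E b2E b3E => -> [] -> [] ->; split; lia.
Qed.

Record assoc_matrix (n1 n2 n3 c1 c2 c3 r12 r13 r21 r23 r31 r32 : nat) : Prop := AssocMatrix {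
  gen1_gt0 : 0 < n1; gen2_gt0 : 0 < n2; gen3_gt0 : 0 < n3;
  c1_min : is_c n1 n2 n3 c1; c2_min : is_c n2 n1 n3 c2; c3_min : is_c n3 n1 n2 c3;
  row1 : c1 * n1 = r12 * n2 + r13 * n3;
  row2 : c2 * n2 = r21 * n1 + r23 * n3;
  row3 : c3 * n3 = r31 * n1 + r32 * n2;
  neq12 : c1 * n1 <> c2 * n2; neq13 : c1 * n1 <> c3 * n3; neq23 : c2 * n2 <> c3 * n3 }.

Section Symmetry.
Variables n1 n2 n3 c1 c2 c3 r12 r13 r21 r23 r31 r32 : nat.
Hypothesis A : assoc_matrix n1 n2 n3 c1 c2 c3 r12 r13 r21 r23 r31 r32.

Lemma assoc_matrix_swap12 : assoc_matrix n2 n1 n3 c2 c1 c3 r21 r23 r12 r13 r32 r31.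
Proof.
by case: A => *; split=> //; [apply: is_cC | rewrite addnC | apply: nesym].
Qed.

Lemma assoc_matrix_swap23 : assoc_matrix n1 n3 n2 c1 c3 c2 r13 r12 r31 r32 r21 r23.
Proof.
by case: A => *; split=> //; [apply: is_cC | rewrite addnC | apply: nesym].
Qed.

End Symmetry.

Section Positivity.
Variables n1 n2 n3 c1 c2 c3 r12 r13 r21 r23 r31 r32 : nat.
Hypothesis A : assoc_matrix n1 n2 n3 c1 c2 c3 r12 r13 r21 r23 r31 r32.

(* If r13 = 0, [is_c_pure_rel] around the cycle 1 -> 2 -> 3 -> 1 yields
   c1 n1 > c2 n2 > c3 n3 > c1 n1. *)
Lemma r13_gt0 : 0 < r13.
Proof.
case: A => n1_gt0 n2_gt0 n3_gt0 c1_min c2_min c3_min def_c1 _ _ neq12 neq13 neq23.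
case: (posnP r13) => // r13_0; rewrite r13_0 mul0n addn0 in def_c1.
have [lt21 [w def_c2]] := is_c_pure_rel n1_gt0 n2_gt0 c1_min c2_min def_c1 neq12.
have [lt32 [u def_c3]] :=
  is_c_pure_rel n2_gt0 n3_gt0 (is_cC c2_min) (is_cC c3_min) def_c2 neq23.
have [lt13 _] :=
  is_c_pure_rel n3_gt0 n1_gt0 c3_min (is_cC c1_min) def_c3 (nesym neq13).
lia.
Qed.

End Positivity.

Section RowBound.
Variables n1 n2 n3 c1 c2 c3 r12 r13 r21 r23 r31 r32 : nat.
Hypothesis A : assoc_matrix n1 n2 n3 c1 c2 c3 r12 r13 r21 r23 r31 r32.

Lemma r32_lt_c2 : r32 < c2.
Proof.
have r31_gt0 := r13_gt0 (assoc_matrix_swap12 (assoc_matrix_swap23 (assoc_matrix_swap12 A))).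
have r23_gt0 := r13_gt0 (assoc_matrix_swap12 A).
case: A => n1_gt0 n2_gt0 n3_gt0 _ _ c3_min _ def_c2 def_c3 _ _ _.
rewrite ltnNge; apply/negP => c2_le.
case: (ltnP r23 c3) => [r23_lt|]; last by nia.
have := is_c_le (a := r31 + r21) (b := r32 - c2) c3_min (_ : 0 < c3 - r23); nia.
Qed.

End RowBound.

Section ColumnBound.
Variables n1 n2 n3 c1 c2 c3 r12 r13 r21 r23 r31 r32 : nat.
Hypothesis A : assoc_matrix n1 n2 n3 c1 c2 c3 r12 r13 r21 r23 r31 r32.

Lemma c2_le_col2 : c2 <= r12 + r32.
Proof.
have r31_lt := r32_lt_c2 (assoc_matrix_swap12 A).
have r13_lt := r32_lt_c2 (assoc_matrix_swap23 (assoc_matrix_swap12 A)).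
have r12_gt0 := r13_gt0 (assoc_matrix_swap23 A).
case: A => n1_gt0 n2_gt0 n3_gt0 _ c2_min _ def_c1 _ def_c3 _ _ _.
apply: (is_c_le (a := c1 - r31) (b := c3 - r13) c2_min); nia.
Qed.

End ColumnBound.

Section ColumnIdentity.
Variables n1 n2 n3 c1 c2 c3 r12 r13 r21 r23 r31 r32 : nat.
Hypothesis A : assoc_matrix n1 n2 n3 c1 c2 c3 r12 r13 r21 r23 r31 r32.

(* Summing the rows: the column excesses (r21 + r31 - c1) n1 + (r12 + r32 - c2) n2
   + (r13 + r23 - c3) n3 vanish, and each is nonnegative. *)
Lemma c2_eq_col2 : c2 = r12 + r32.
Proof.
have c1_le := c2_le_col2 (assoc_matrix_swap12 A).
have c2_le := c2_le_col2 A.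
have c3_le := c2_le_col2 (assoc_matrix_swap23 A).
case: A => n1_gt0 n2_gt0 n3_gt0 _ _ _ def_c1 def_c2 def_c3 _ _ _.
nia.
Qed.

Lemma c2n2_fact a b c :
  a * n1 + b * n2 + c * n3 = c2 * n2 -> 0 < a + c -> [/\ a = r21, b = 0 & c = r23].
Proof.
move=> eq_rep ac_gt0.
have r21_lt := r32_lt_c2 (assoc_matrix_swap12 (assoc_matrix_swap23 A)).
have r23_lt := r32_lt_c2 (assoc_matrix_swap23 A).
case: A => n1_gt0 n2_gt0 n3_gt0 c1_min c2_min c3_min _ def_c2 _ _ _ _.
have b0 : b = 0.
  case: (posnP b) => // b_gt0; case: (ltnP b c2) => [b_lt|]; last by nia.
  by have := is_c_le (a := a) (b := c) c2_min (_ : 0 < c2 - b); nia.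
have [] := two_gen_rep_unique (a := a) (c := c) n1_gt0 n3_gt0 c1_min (is_cC c3_min) r21_lt r23_lt.
  by rewrite -def_c2 -eq_rep b0; lia.
by move=> -> ->.
Qed.

End ColumnIdentity.

Lemma row_sum_lt_c p q s c a b : p < q -> p < s -> 0 < c ->
  c * p = a * q + b * s -> a + b < c.
Proof. nia. Qed.

Lemma c_lt_row_sum p q s c a b : p < s -> q < s -> 0 < c ->
  c * s = a * p + b * q -> c < a + b.
Proof. nia. Qed.

Section Exchange.
Variables n1 n2 n3 c1 c2 c3 r12 r13 r21 r23 r31 r32 : nat.
Hypothesis A : assoc_matrix n1 n2 n3 c1 c2 c3 r12 r13 r21 r23 r31 r32.
Hypotheses (lt12 : n1 < n2) (lt23 : n2 < n3).
Let n1_gt0 := gen1_gt0 A.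
Let n2_gt0 := gen2_gt0 A.
Let n3_gt0 := gen3_gt0 A.
Let r21_gt0 : 0 < r21 := r13_gt0 (assoc_matrix_swap23 (assoc_matrix_swap12 A)).
Let r23_gt0 : 0 < r23 := r13_gt0 (assoc_matrix_swap12 A).
Let r31_gt0 : 0 < r31 :=
  r13_gt0 (assoc_matrix_swap12 (assoc_matrix_swap23 (assoc_matrix_swap12 A))).
Let row1_lt_c1 : r12 + r13 < c1 :=
  row_sum_lt_c lt12 (ltn_trans lt12 lt23) (is_c_gt0 (c1_min A)) (row1 A).
Let c3_lt_row3 : c3 < r31 + r32 :=
  c_lt_row_sum (ltn_trans lt12 lt23) lt23 (is_c_gt0 (c3_min A)) (row3 A).

Lemma exchange_to_n1 y b c : c2 <= r21 + r23 -> b * n2 + c * n3 = y ->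
  (exists u v w, u.+1 * n1 + v * n2 + w * n3 = y) ->
  exists a b' c', a.+1 * n1 + b' * n2 + c' * n3 = y /\ b + c <= a.+1 + b' + c'.
Proof.
move=> c2_le def_y [u [v [w def_y']]].
case: A => _ _ _ c1_min c2_min c3_min def_c1 def_c2 def_c3 _ _ _.
case: (leqP c3 c) => [/subnKC def_c|c_lt].
  exists r31.-1, (b + r32), (c - c3); rewrite prednK //.
  by move: def_y; rewrite -def_c mulnDl def_c3; lia.
case: (leqP c2 b) => [/subnKC def_b|b_lt].
  exists r21.-1, (b - c2), (c + r23); rewrite prednK //.
  by move: def_y; rewrite -def_b mulnDl def_c2; lia.
case: (boolP ((r12 <= b) && (r13 <= c))) => [/andP[/subnKC def_b /subnKC def_c]|/andP not_le].
  exists c1.-1, (b - r12), (c - r13); rewrite prednK ?(is_c_gt0 c1_min) //.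
  by move: def_y; rewrite -def_b -def_c !mulnDl; lia.
have eq_y : u.+1 * n1 + v * n2 + w * n3 = b * n2 + c * n3 by rewrite def_y def_y'.
by have := apery_coord_eq0 n1_gt0 n2_gt0 n3_gt0 c1_min c2_min c3_min def_c1 b_lt c_lt not_le eq_y.
Qed.

Lemma exchange_to_n3 y a b : r21 + r23 <= c2 -> a * n1 + b * n2 = y ->
  (exists u v w, u * n1 + v * n2 + w.+1 * n3 = y) ->
  exists a' b' c, a' * n1 + b' * n2 + c.+1 * n3 = y /\ a' + b' + c.+1 <= a + b.
Proof.
move=> c2_ge def_y [u [v [w def_y']]].
case: A => _ _ _ c1_min c2_min c3_min def_c1 def_c2 def_c3 _ _ _.
case: (leqP c1 a) => [/subnKC def_a|a_lt].
  exists (a - c1), (b + r12), r13.-1; rewrite prednK ?(r13_gt0 A) //.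
  by move: def_y; rewrite -def_a mulnDl def_c1; lia.
case: (leqP c2 b) => [/subnKC def_b|b_lt].
  exists (a + r21), (b - c2), r23.-1; rewrite prednK //.
  by move: def_y; rewrite -def_b mulnDl def_c2; lia.
case: (boolP ((r31 <= a) && (r32 <= b))) => [/andP[/subnKC def_a /subnKC def_b]|/andP not_le].
  exists (a - r31), (b - r32), c3.-1; rewrite prednK ?(is_c_gt0 c3_min) //.
  by move: def_y; rewrite -def_a -def_b !mulnDl; lia.
have eq_y : w.+1 * n3 + u * n1 + v * n2 = a * n1 + b * n2 by rewrite def_y -def_y'; lia.
by have := apery_coord_eq0 n3_gt0 n1_gt0 n2_gt0 c3_min (is_cC c1_min) (is_cC c2_min) def_c3
  a_lt b_lt not_le eq_y.
Qed.

Lemma Lmax_addn1 : c2 <= r21 + r23 ->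
  forall x, inM n1 n2 n3 x -> Lmax n1 n2 n3 (x + n1) = Lmax n1 n2 n3 x + 1.
Proof.
move=> c2_le x xM; have [u [v [w def_x]]] := xM.
have yM : inM n1 n2 n3 (x + n1) by exists u.+1, v, w; rewrite mulSn; lia.
apply/eqP; rewrite eqn_leq; apply/andP; split.
- have [a' [b' [c' [def_y ->]]]] := Lmax_attained n1_gt0 n2_gt0 n3_gt0 yM.
  suff [a [b [c [def_y' len_le]]]] : exists a b c,
      a.+1 * n1 + b * n2 + c * n3 = x + n1 /\ a' + b' + c' <= a.+1 + b + c.
    have := Lmax_ge n1_gt0 n2_gt0 n3_gt0 (_ : a * n1 + b * n2 + c * n3 = x).
    by rewrite mulSn in def_y'; lia.
  case: a' def_y => [|a'] def_y; last by exists a', b', c'.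
  apply: exchange_to_n1 c2_le _ _; first by rewrite -def_y; lia.
  by exists u, v, w; rewrite -def_x; lia.
- have [a [b [c [def_x' ->]]]] := Lmax_attained n1_gt0 n2_gt0 n3_gt0 xM.
  by rewrite addn1 -!addSn; apply: (Lmax_ge n1_gt0 n2_gt0 n3_gt0); rewrite mulSn; lia.
Qed.

Lemma lmin_addn3 : r21 + r23 <= c2 ->
  forall x, inM n1 n2 n3 x -> lmin n1 n2 n3 (x + n3) = lmin n1 n2 n3 x + 1.
Proof.
move=> c2_ge x xM; have [u [v [w def_x]]] := xM.
have yM : inM n1 n2 n3 (x + n3) by exists u, v, w.+1; rewrite mulSn; lia.
apply/eqP; rewrite eqn_leq; apply/andP; split.
- have [a [b [c [def_x' ->]]]] := lmin_attained n1_gt0 n2_gt0 n3_gt0 xM.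
  by rewrite addn1 -addnS; apply: (lmin_le n1_gt0 n2_gt0 n3_gt0); rewrite mulSn; lia.
- have [a' [b' [c' [def_y ->]]]] := lmin_attained n1_gt0 n2_gt0 n3_gt0 yM.
  suff [a [b [c [def_y' len_le]]]] : exists a b c,
      a * n1 + b * n2 + c.+1 * n3 = x + n3 /\ a + b + c.+1 <= a' + b' + c'.
    have := lmin_le n1_gt0 n2_gt0 n3_gt0 (_ : a * n1 + b * n2 + c * n3 = x).
    by rewrite mulSn in def_y'; lia.
  case: c' def_y => [|c'] def_y; last by exists a', b', c'.
  rewrite addn0; apply: exchange_to_n3 c2_ge _ _; first by rewrite -def_y; lia.
  by exists u, v, w; rewrite -def_x mulSn; lia.
Qed.

Lemma Lmax_addn1P :
  (forall x, inM n1 n2 n3 x -> Lmax n1 n2 n3 (x + n1) = Lmax n1 n2 n3 x + 1) <->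
  c2 <= r21 + r23.
Proof.
split=> [Lmax_succ|]; last exact: Lmax_addn1.
rewrite leqNgt; apply/negP => c2_gt.
have xM : inM n1 n2 n3 (r21.-1 * n1 + r23 * n3) by exists r21.-1, 0, r23; lia.
have def_y : r21.-1 * n1 + r23 * n3 + n1 = c2 * n2.
  by rewrite (row2 A) -{2}(prednK r21_gt0) mulSn; lia.
have := Lmax_succ _ xM; rewrite def_y.
have := Lmax_ge n1_gt0 n2_gt0 n3_gt0 (a := 0) (b := c2) (c := 0) (x := c2 * n2) (addn0 _).
have [a [b [c [def_x ->]]]] := Lmax_attained n1_gt0 n2_gt0 n3_gt0 xM.
have [|//|a_eq -> c_eq] := c2n2_fact A (a := a.+1) (b := b) (c := c).
  by rewrite mulSn -def_y -def_x; lia.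
lia.
Qed.

Lemma lmin_addn3P :
  (forall x, inM n1 n2 n3 x -> lmin n1 n2 n3 (x + n3) = lmin n1 n2 n3 x + 1) <->
  r21 + r23 <= c2.
Proof.
split=> [lmin_succ|]; last exact: lmin_addn3.
rewrite leqNgt; apply/negP => c2_lt.
have xM : inM n1 n2 n3 (r21 * n1 + r23.-1 * n3) by exists r21, 0, r23.-1; lia.
have def_y : r21 * n1 + r23.-1 * n3 + n3 = c2 * n2.
  by rewrite (row2 A) -{2}(prednK r23_gt0) mulSn; lia.
have := lmin_succ _ xM; rewrite def_y.
have := lmin_le n1_gt0 n2_gt0 n3_gt0 (a := 0) (b := c2) (c := 0) (x := c2 * n2) (addn0 _).
have [a [b [c [def_x ->]]]] := lmin_attained n1_gt0 n2_gt0 n3_gt0 xM.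
have [||a_eq -> c_eq] := c2n2_fact A (a := a) (b := b) (c := c.+1); rewrite ?addnS //.
  by rewrite mulSn -def_y -def_x; lia.
lia.
Qed.

End Exchange.

Theorem mainTheorem7 (n1 n2 n3 : nat)
  (hM : numerical3 n1 n2 n3) (hB : three_betti n1 n2 n3)
  (c1 c2 c3 r12 r13 r21 r23 r31 r32 : nat)
  (hc1 : is_c1 n1 n2 n3 c1) (hc2 : is_c2 n1 n2 n3 c2) (hc3 : is_c3 n1 n2 n3 c3)
  (e1 : c1 * n1 = r12 * n2 + r13 * n3)
  (e2 : c2 * n2 = r21 * n1 + r23 * n3)
  (e3 : c3 * n3 = r31 * n1 + r32 * n2) :
  ((forall x, inM n1 n2 n3 x -> Lmax n1 n2 n3 (x + n1) = Lmax n1 n2 n3 x + 1)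
     <-> r12 + r32 <= r21 + r23) /\
  ((forall x, inM n1 n2 n3 x -> lmin n1 n2 n3 (x + n3) = lmin n1 n2 n3 x + 1)
     <-> r21 + r23 <= r12 + r32).
Proof.
case: hM => /andP[lt12 lt23] _ n1_irred _ _.
have n1_gt0 : 0 < n1.
  by case: (posnP n1) => // n1_0; case: n1_irred; exists 0, 0; rewrite n1_0.
have [n2_gt0 n3_gt0] : 0 < n2 /\ 0 < n3 by lia.
have [neq12 neq13 neq23] := three_betti_neq n1_gt0 n2_gt0 n3_gt0 hc1 hc2 hc3 hB.
have A := AssocMatrix n1_gt0 n2_gt0 n3_gt0 hc1 hc2 hc3 e1 e2 e3 neq12 neq13 neq23.
rewrite -(c2_eq_col2 A).
by split; [exact: Lmax_addn1P A lt12 lt23 | exact: lmin_addn3P A lt12 lt23].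
Qed.
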